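(* Let $K$ be a field, $\mathcal A$ a $K$-algebra, $\vartheta$ any one of the four types (left, right, pre-two-sided, two-sided), and $(M_i)_{i\ge1}$ a sequence of non-trivial $\vartheta$-Mathieu subspaces of $\mathcal A$ with $M_i\subseteq M_{i+1}$ for all $i\ge1$. Assume every element of $\sqrt{\bigcup_{i\ge1}M_i}$ is algebraic over $K$. Then $\bigcup_{i\ge1}M_i$ is a non-trivial $\vartheta$-Mathieu subspace of $\mathcal A$.
   Context: All algebras are associative and unital. $\sqrt S$ is the set of $a\in\mathcal A$ with $a^m\in S$ for all sufficiently large $m$. A subspace is non-trivial if it is neither $0$ nor $\mathcal A$. A $K$-subspace $V$ is a left (resp. right) Mathieu subspace if whenever $a^m\in V$ for all $m\ge1$, then for every $b\in\mathcal A$, $ba^m\in V$ (resp. $a^mb\in V$) for all sufficiently large $m$; pre-two-sided if both left and right; two-sided if whenever $a^m\in V$ for all $m\ge1$, for all $b,c\in\mathcal A$, $ba^mc\in V$ for all sufficiently large $m$. *)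

From HB Require Import structures.
From mathcomp Require Import all_boot all_order all_algebra.
Set Implicit Arguments. Unset Strict Implicit. Unset Printing Implicit Defensive.
Import GRing.Theory.
Local Open Scope ring_scope.

Section Mathieu.
Variables (K : fieldType) (A : algType K).

Definition is_subspace (V : A -> Prop) : Prop :=
  V 0 /\ (forall x y, V x -> V y -> V (x + y)) /\ (forall (k : K) x, V x -> V (k *: x)).

Definition nontrivial_subspace (V : A -> Prop) : Prop :=
  (exists x, V x /\ x <> 0) /\ (exists x, ~ V x).

Definition radical (S : A -> Prop) : A -> Prop :=
  fun a => exists N : nat, forall m : nat, (N <= m)%N -> S (a ^+ m).

Definition algebraic_over (a : A) : Prop :=
  exists p : {poly K}, p != 0 /\ horner_alg a p = 0.

Inductive mathieu_type := MLeft | MRight | MPreTwoSided | MTwoSided.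

Definition powers_in (V : A -> Prop) (a : A) : Prop :=
  forall m : nat, (1 <= m)%N -> V (a ^+ m).

Definition eventually (P : nat -> Prop) : Prop :=
  exists N : nat, forall m : nat, (N <= m)%N -> P m.

Definition left_mathieu (V : A -> Prop) : Prop :=
  forall a, powers_in V a -> forall b, eventually (fun m => V (b * a ^+ m)).

Definition right_mathieu (V : A -> Prop) : Prop :=
  forall a, powers_in V a -> forall b, eventually (fun m => V (a ^+ m * b)).

Definition two_sided_mathieu (V : A -> Prop) : Prop :=
  forall a, powers_in V a -> forall b c, eventually (fun m => V (b * a ^+ m * c)).

Definition is_mathieu (t : mathieu_type) (V : A -> Prop) : Prop :=
  is_subspace V /\
  match t with
  | MLeft => left_mathieu V
  | MRight => right_mathieu V
  | MPreTwoSided => left_mathieu V /\ right_mathieu V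
  | MTwoSided => two_sided_mathieu V
  end.

End Mathieu.

(* If the powers of an algebraic element a of degree n all lie in the union U of the chain,
   then a, ..., a^n already lie in one M_i, and a polynomial relation of a expresses every
   higher power as a combination of lower ones, so all powers of a lie in that M_i.  The
   Mathieu property of M_i then yields the Mathieu property of U.  Finally 1 is not in U,
   since a Mathieu subspace containing 1 is the whole algebra. *)

From HB Require Import structures.
From mathcomp Require Import all_boot all_order all_algebra.
From mathcomp Require Import zify.
Set Implicit Arguments. Unset Strict Implicit. Unset Printing Implicit Defensive.
Import GRing.Theory.
Local Open Scope ring_scope.

Section Subspaces.
Variables (K : fieldType) (A : algType K).
Implicit Types (V W : A -> Prop) (a : A).

Lemma subspace_sum V I (r : seq I) (P : pred I) (F : I -> A) :
  is_subspace V -> (forall i, P i -> V (F i)) -> V (\sum_(i <- r | P i) F i).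
Proof. by move=> [V0 [VD _]] VF; apply: big_ind. Qed.

Lemma horner_alg_sum a (p : {poly K}) :
  horner_alg a p = \sum_(i < size p) p`_i *: a ^+ i.
Proof.
rewrite -{1}(coefK p) poly_def linear_sum /=.
by apply: eq_bigr => i _; rewrite linearZ /= rmorphXn /= horner_algX -scalerAl mul1r.
Qed.

(* The relation p(a) = 0 writes [c *: a ^+ n] as a combination of lower powers of a;
   multiplying it by [a ^+ (k - n)] lowers any exponent k > n. *)
Lemma subspace_powers_of_root V a (p : {poly K}) :
  is_subspace V -> p != 0 -> horner_alg a p = 0 ->
  (forall j, (1 <= j)%N -> (j < size p)%N -> V (a ^+ j)) -> powers_in V a.
Proof.
move=> HV p0 pa0 Vlow; have [_ [_ VZ]] := HV.
set n := (size p).-1; set c := lead_coef p.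
have size_p : size p = n.+1 by rewrite /n prednK // size_poly_gt0.
have c0 : c != 0 by rewrite lead_coef_eq0.
have top : c *: a ^+ n = \sum_(k < n) - p`_k *: a ^+ k.
  move: pa0; rewrite horner_alg_sum size_p big_ord_recr /= -/n.
  rewrite /c lead_coefE size_p /= => /eqP; rewrite addrC addr_eq0 => /eqP ->.
  by rewrite -sumrN; apply: eq_bigr => k _; rewrite scaleNr.
move=> m; elim: m {-2}m (leqnn m) => [|m IH] k le_km k_gt0; first lia.
have [le_kn | lt_nk] := leqP k n; first by apply: Vlow => //; rewrite size_p.
have -> : a ^+ k = c^-1 *: (a ^+ (k - n) * (c *: a ^+ n)).
  by rewrite -scalerAr scalerA mulVf // scale1r -exprD subnK // ltnW.
apply: (VZ); rewrite top mulr_sumr; apply: subspace_sum => // i _.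
rewrite -scalerAr -exprD; apply: VZ; apply: IH; have := ltn_ord i; lia.
Qed.

Lemma eventually_sub V W (f : nat -> A) :
  (forall x, W x -> V x) -> eventually (fun m => W (f m)) -> eventually (fun m => V (f m)).
Proof. by move=> WV [N HN]; exists N => m /HN /WV. Qed.

Lemma mathieu_of_local t V :
  is_subspace V ->
  (forall a, powers_in V a ->
     exists W, [/\ is_mathieu t W, powers_in W a & forall x, W x -> V x]) ->
  is_mathieu t V.
Proof.
move=> HV loc; split=> //.
case: t loc => loc /=.
- move=> a /loc [W [[_ HL] Wa WV]] b; exact: eventually_sub WV (HL a Wa b).
- move=> a /loc [W [[_ HR] Wa WV]] b; exact: eventually_sub WV (HR a Wa b).
- split=> a /loc [W [[_ [HL HR]] Wa WV]] b.
    exact: eventually_sub WV (HL a Wa b).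
  exact: eventually_sub WV (HR a Wa b).
- move=> a /loc [W [[_ HT] Wa WV]] b c; exact: eventually_sub WV (HT a Wa b c).
Qed.

Lemma mathieu_one_full t V : is_mathieu t V -> V 1 -> forall y, V y.
Proof.
move=> [_ HV] V1 y.
have P1 : powers_in V 1 by move=> m _; rewrite expr1n.
case: t HV => /=.
- by move=> HL; have [N /(_ N (leqnn N))] := HL 1 P1 y; rewrite expr1n mulr1.
- by move=> HR; have [N /(_ N (leqnn N))] := HR 1 P1 y; rewrite expr1n mul1r.
- by move=> [HL _]; have [N /(_ N (leqnn N))] := HL 1 P1 y; rewrite expr1n mulr1.
- by move=> HT; have [N /(_ N (leqnn N))] := HT 1 P1 y 1; rewrite expr1n !mulr1.
Qed.

End Subspaces.

Section Chain.
Variables (K : fieldType) (A : algType K) (M : nat -> A -> Prop).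
Hypothesis M_sub : forall i, (1 <= i)%N -> is_subspace (M i).
Hypothesis M_inc : forall i, (1 <= i)%N -> forall x, M i x -> M i.+1 x.

Let U (x : A) := exists2 i, (1 <= i)%N & M i x.

Lemma chain_mono i j x : (1 <= i)%N -> (i <= j)%N -> M i x -> M j x.
Proof.
move=> i_gt0; elim: j => [|j IH] le_ij Mx; first lia.
have [<- // | ne_ij] := eqVneq i j.+1.
by apply: M_inc; [lia | apply: IH => //; lia].
Qed.

Lemma chain_union_subspace : is_subspace U.
Proof.
split; first by exists 1%N => //; case: (M_sub (isT : (1 <= 1)%N)).
split=> [x y [i Hi Mx] [j Hj My] | k x [i Hi Mx]].
  exists (maxn i j); first lia.
  have [_ [MD _]] := M_sub (leq_trans Hi (leq_maxl i j)).
  by apply: MD; [apply: (chain_mono Hi) | apply: (chain_mono Hj)] => //; lia.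
by exists i => //; have [_ [_ MZ]] := M_sub Hi; apply: MZ.
Qed.

Lemma chain_union_finite (f : nat -> A) n :
  (forall j, (1 <= j)%N -> (j <= n)%N -> U (f j)) ->
  exists2 i, (1 <= i)%N & forall j, (1 <= j)%N -> (j <= n)%N -> M i (f j).
Proof.
elim: n => [|n IH] Uf; first by exists 1%N => // j; lia.
have [i Hi Mi] : exists2 i, (1 <= i)%N &
    forall j, (1 <= j)%N -> (j <= n)%N -> M i (f j).
  by apply: IH => j *; apply: Uf => //; lia.
have [i' Hi' Mfn] := Uf n.+1 isT (leqnn _).
exists (maxn i i'); first lia.
move=> j j_gt0; rewrite leq_eqVlt ltnS => /orP[/eqP -> | le_jn].
  by apply: (chain_mono Hi') Mfn; lia.
by apply: (chain_mono Hi); [lia | exact: Mi].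
Qed.

Lemma chain_union_powers_in a :
  algebraic_over a -> powers_in U a -> exists2 i, (1 <= i)%N & powers_in (M i) a.
Proof.
move=> [p [p0 pa0]] Ua.
have [i Hi Mi] := @chain_union_finite (GRing.exp a) (size p).-1 (fun j j1 _ => Ua j j1).
exists i => //; apply: (subspace_powers_of_root (M_sub Hi) p0 pa0) => j j1 jp.
by apply: Mi; lia.
Qed.

End Chain.

Theorem proposition4p18 (K : fieldType) (A : algType K) (t : mathieu_type)
  (M : nat -> A -> Prop)
  (hM : forall i : nat, (1 <= i)%N -> is_mathieu t (M i) /\ nontrivial_subspace (M i))
  (hinc : forall i : nat, (1 <= i)%N -> forall x : A, M i x -> M i.+1 x)
  (halg : forall a : A,
     radical (fun x : A => exists2 i : nat, (1 <= i)%N & M i x) a -> algebraic_over a) :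
  let U := fun x : A => exists2 i : nat, (1 <= i)%N & M i x in
  is_mathieu t U /\ nontrivial_subspace U.
Proof.
move=> U.
have M_sub i : (1 <= i)%N -> is_subspace (M i) by move=> /hM [[]].
have U_sub : is_subspace U := chain_union_subspace M_sub hinc.
split.
  apply: mathieu_of_local => // a Ua.
  have a_alg : algebraic_over a by apply: halg; exists 1%N => m /Ua.
  have [i Hi Ma] := chain_union_powers_in M_sub hinc a_alg Ua.
  by exists (M i); split; [exact: (hM i Hi).1 | exact: Ma | move=> x Mx; exists i].
split.
  by have [[x [Mx x0]] _] := (hM 1%N isT).2; exists x; split => //; exists 1%N.
exists 1 => -[i Hi M1].
have [Mathieu_i [_ [y Ny]]] := hM i Hi.
exact/Ny/(mathieu_one_full Mathieu_i M1).
Qed.
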